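(* Let $A=\begin{bmatrix}0&B\\0&C\end{bmatrix}$ act on $\mathbb{C}^m\oplus\mathbb{C}^d$, with $B\in M_{m\times d}$, $C\in M_d$ and $B^*B+C^*C=I_d$, and let $D=I_d-C^*C$. Define $P_C(x,y)=\det(I-xC-yC^* )$ and $Q_C(x,y)=\det(I-xC-yC^*-xyD)$. Then for every $z\in\mathbb{C}\setminus\{0\}$ and $\theta\in\mathbb{R}$, $$\det(zI-e^{-i\theta}A-e^{i\theta}A^* )=z^{m+d}Q_C\!\left(\tfrac{e^{-i\theta}}{z},\tfrac{e^{i\theta}}{z}\right),\qquad \det(zI-e^{-i\theta}C-e^{i\theta}C^* )=z^{d}P_C\!\left(\tfrac{e^{-i\theta}}{z},\tfrac{e^{i\theta}}{z}\right).$$ Consequently: (i) $A$ has the Circularity property if and only if $Q_C(x,y)\in\mathbb{C}[xy]$ (i.e. $Q_C$ is a polynomial in the product $xy$ alone); (ii) $C$ has the Circularity property if and only if $P_C(x,y)\in\mathbb{C}[xy]$.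
   Context: For $X\in M_n(\mathbb{C})$, $H_X(\theta)=\frac12(e^{-i\theta}X+e^{i\theta}X^* )$; $X$ has the Circularity property if the spectrum of $H_X(\theta)$ is independent of $\theta\in\mathbb{R}$. *)

From HB Require Import structures.
From mathcomp Require Import all_boot all_order all_algebra.
From mathcomp Require Import all_classical all_reals.
From mathcomp Require Import trigo.
From mathcomp.real_closed Require Import complex.
Set Implicit Arguments. Unset Strict Implicit. Unset Printing Implicit Defensive.
Import Order.TTheory GRing.Theory Num.Theory.
Local Open Scope ring_scope.
Local Open Scope complex_scope.

Section Defs.
Variable R : realType.
Local Notation K := R[i].

Definition expi (t : R) : K := cos t +i* sin t.

Definition adjmx m n (M : 'M[K]_(m, n)) : 'M[K]_(n, m) := (map_mx conjc M)^T.

Definition Hmx n (X : 'M[K]_n) (t : R) : 'M[K]_n :=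
  2^-1 *: (expi (- t) *: X + expi t *: adjmx X).

Definition circular n (X : 'M[K]_n) : Prop :=
  forall t1 t2 : R, forall a : K, eigenvalue (Hmx X t1) a = eigenvalue (Hmx X t2) a.

(* bivariate polynomials: outer variable y, inner variable x *)
Definition polyx : {poly {poly K}} := (polyX K)%:P.
Definition polyy : {poly {poly K}} := polyX {poly K}.
Definition cst2 (c : K) : {poly {poly K}} := c%:P%:P.
Definition lift2 m n (M : 'M[K]_(m, n)) : 'M[{poly {poly K}}]_(m, n) := map_mx cst2 M.

Definition eval2 (p : {poly {poly K}}) (x y : K) : K := (p.[y%:P]).[x].

Definition PC d (C : 'M[K]_d) : {poly {poly K}} :=
  \det (1%:M - polyx *: lift2 C - polyy *: lift2 (adjmx C)).

Definition QC d (C : 'M[K]_d) : {poly {poly K}} :=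
  \det (1%:M - polyx *: lift2 C - polyy *: lift2 (adjmx C)
        - (polyx * polyy) *: lift2 (1%:M - adjmx C *m C)).

Definition in_Cxy (p : {poly {poly K}}) : Prop :=
  exists q : {poly K}, p = (map_poly cst2 q).[polyx * polyy].

End Defs.

From HB Require Import structures.
From mathcomp Require Import all_boot all_order all_algebra.
From mathcomp Require Import all_classical all_reals.
From mathcomp Require Import trigo.
From mathcomp.real_closed Require Import complex.
From mathcomp.algebra_tactics Require Import ring.
From mathcomp Require Import zify.
Import Order.TTheory GRing.Theory Num.Theory.
Set Implicit Arguments. Unset Strict Implicit. Unset Printing Implicit Defensive.
Local Open Scope ring_scope.
Local Open Scope complex_scope.

(* The determinant identities are Schur complements: the top-left block of
   [z - e^{-it} A - e^{it} A^*] is scalar, and [B^* B = I - C^* C = D].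
   Writing [X_t = e^{-it} X + e^{it} X^*] (so that [H_X(t) = X_t / 2]), such an
   identity expresses the characteristic polynomial of [X_t] through the values of
   [P] at [(e^{-it} u, e^{it} u)].  Hence [X] is circular iff these values do not
   depend on [t], iff [P] only has monomials [(xy)^k] (compare the coefficients
   of [u^a e^{ibt}]).  That equal spectra force equal characteristic polynomials
   follows because, as [t] varies, the characteristic polynomial of [X_t] takes
   finitely many values (its roots lie in the spectrum of [X_0]) while its
   coefficients are Laurent polynomials in [e^{it}]. *)

Lemma poly_eq0_of_inj_roots (F : idomainType) (p : {poly F}) (f : nat -> F) :
  injective f -> (forall k, p.[f k] = 0) -> p = 0.
Proof.
move=> f_inj pf0; apply/eqP; apply: contraT => p_neq0.
have roots_p : all (root p) (map f (iota 0 (size p))).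
  by apply/allP => _ /mapP[k _ ->]; apply/rootP.
have uniq_f : uniq (map f (iota 0 (size p))) by rewrite map_inj_uniq ?iota_uniq.
by have := max_poly_roots p_neq0 roots_p uniq_f; rewrite size_map size_iota ltnn.
Qed.

Lemma horner_char_poly (F : comNzRingType) n (M : 'M[F]_n) z :
  (char_poly M).[z] = \det (z%:M - M).
Proof.
rewrite /char_poly -[_.[z]]/(horner_eval z _) -det_map_mx; congr (\det _).
by apply/matrixP => i j; rewrite !mxE rmorphB rmorphMn /= !horner_evalE hornerX hornerC.
Qed.

Lemma det_scalar_block_mx (F : fieldType) m n (a : F) (U : 'M_(m, n))
    (L : 'M_(n, m)) (D : 'M_n) : a != 0 ->
  \det (block_mx a%:M U L D) = a ^+ m * \det (D - a^-1 *: (L *m U)).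
Proof.
move=> a0.
have -> : block_mx a%:M U L D
    = block_mx 1%:M 0 (a^-1 *: L) 1%:M *m block_mx a%:M U 0 (D - a^-1 *: (L *m U)).
  rewrite mulmx_block !mul1mx !mul0mx !addr0 mul_mx_scalar scalerA mulfV //.
  by rewrite scale1r -scalemxAl addrC subrK.
by rewrite det_mulmx det_lblock det_ublock !det1 det_scalar !mul1r.
Qed.

Definition prods_XsubC_over (F : nzRingType) (S : seq F) n : seq {poly F} :=
  codom (fun f : {ffun 'I_n -> 'I_(size S)} => \prod_(i < n) ('X - (nth 0 S (f i))%:P)).

Lemma monic_mem_prods_XsubC_over (F : closedFieldType) (S : seq F) n (p : {poly F}) :
  p \is monic -> size p = n.+1 -> (forall z, root p z -> z \in S) ->
  p \in prods_XsubC_over S n.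
Proof.
move=> /monicP p_monic p_size rootsS.
have [rs Ers] := closed_field_poly_normal p; rewrite p_monic scale1r in Ers.
have rs_size : size rs = n by move: p_size; rewrite Ers size_prod_XsubC => -[].
have rsS r : r \in rs -> r \in S by move=> r_rs; rewrite rootsS // Ers root_prod_XsubC.
have index_lt (i : 'I_n) : (index (nth 0%R rs i) S < size S)%N.
  by rewrite index_mem rsS // mem_nth ?rs_size.
apply/codomP; exists [ffun i => Ordinal (index_lt i)].
rewrite Ers (big_nth (0 : F)) rs_size big_mkord; apply: eq_bigr => i _.
by rewrite ffunE /= nth_index // rsS // mem_nth ?rs_size.
Qed.

Section Circularity.
Variable R : realType.
Local Notation K := R[i].

Lemma expi0 : expi (0 : R) = 1.
Proof. by rewrite /expi cos0 sin0. Qed.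

Lemma expiNM (t : R) : expi (- t) * expi t = 1.
Proof.
rewrite /expi cosN sinN /GRing.mul /= mulNr opprK -!expr2 cos2Dsin2.
by rewrite mulNr [cos t * _]mulrC subrr.
Qed.

Lemma expi_neq0 (t : R) : expi t != 0.
Proof. by apply/eqP => e; have := expiNM t; rewrite e mulr0 => /eqP; rewrite eq_sym oner_eq0. Qed.

Lemma expiN (t : R) : expi (- t) = (expi t)^-1.
Proof. by apply: (mulIf (expi_neq0 t)); rewrite expiNM mulVf ?expi_neq0. Qed.

Lemma poly_eq0_on_nonzero (p : {poly K}) :
  (forall u, u != 0 -> p.[u] = 0) -> p = 0.
Proof.
move=> p0; apply: (@poly_eq0_of_inj_roots _ p (fun k => k.+1%:R)).
  by move=> a b /eqP; rewrite eqr_nat => /eqP[].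
by move=> k; apply: p0; rewrite pnatr_eq0.
Qed.

Lemma eq_poly_on_nonzero (p q : {poly K}) :
  (forall u, u != 0 -> p.[u] = q.[u]) -> p = q.
Proof.
move=> pq; apply/eqP; rewrite -subr_eq0; apply/eqP.
by apply: poly_eq0_on_nonzero => u u0; rewrite hornerD hornerN pq ?subrr.
Qed.

Lemma poly_eq0_on_circle (p : {poly K}) : (forall t, p.[expi t] = 0) -> p = 0.
Proof.
move=> p0; apply: (@poly_eq0_of_inj_roots _ p (fun k => expi (acos k.+1%:R^-1))) => //.
have inv_in k : -1 <= (k.+1%:R^-1 : R) <= 1.
  rewrite invf_le1 ?ltr0Sn // ler1n andbT.
  by rewrite (@le_trans _ _ 0) ?lerN10 ?invr_ge0.
have acos_in k : acos (k.+1%:R^-1 : R) \in `[0, pi].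
  by rewrite in_itv /= acos_ge0 ?acos_lepi ?inv_in.
move=> a b /(congr1 (@complex.Re R)) /= /(cos_inj (acos_in a) (acos_in b)).
move/(congr1 cos); rewrite !acosK ?in_itv /= ?inv_in //.
by move/invr_inj/eqP; rewrite eqr_nat => /eqP[].
Qed.

Lemma eval2_det n (M : 'M[{poly {poly K}}]_n) x y :
  eval2 (\det M) x y = \det (map_mx (fun p => eval2 p x y) M).
Proof.
rewrite /eval2 -[_.[y%:P]]/(horner_eval y%:P _) -det_map_mx.
by rewrite -[_.[x]]/(horner_eval x _) -det_map_mx -map_mx_comp.
Qed.

Lemma eval2_PC d (C : 'M[K]_d) x y :
  eval2 (PC C) x y = \det (1%:M - x *: C - y *: adjmx C).
Proof.
rewrite eval2_det; congr (\det _); apply/matrixP => i j.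
by rewrite /eval2 !mxE !hornerE; case: (i == j); rewrite !hornerE.
Qed.

Lemma eval2_QC d (C : 'M[K]_d) x y :
  eval2 (QC C) x y
  = \det (1%:M - x *: C - y *: adjmx C - (x * y) *: (1%:M - adjmx C *m C)).
Proof.
rewrite eval2_det; congr (\det _); apply/matrixP => i j.
by rewrite /eval2 !mxE !hornerE; case: (i == j); rewrite !hornerE.
Qed.

Lemma adjmx0 m n : adjmx (0 : 'M[K]_(m, n)) = 0.
Proof. by apply/matrixP => i j; rewrite !mxE conjc0. Qed.

Lemma adjmx_block_mx m1 m2 n1 n2 (Aul : 'M[K]_(m1, n1)) (Aur : 'M_(m1, n2))
    (Adl : 'M_(m2, n1)) (Adr : 'M_(m2, n2)) :
  adjmx (block_mx Aul Aur Adl Adr)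
  = block_mx (adjmx Aul) (adjmx Adl) (adjmx Aur) (adjmx Adr).
Proof. by rewrite /adjmx map_block_mx tr_block_mx. Qed.

Lemma det_pencil_PC d (C : 'M[K]_d) z t : z != 0 ->
  \det (z%:M - expi (- t) *: C - expi t *: adjmx C)
  = z ^+ d * eval2 (PC C) (expi (- t) / z) (expi t / z).
Proof.
move=> z0; rewrite eval2_PC -detZ; congr (\det _); apply/matrixP => i j.
by rewrite !mxE; case: (i == j); rewrite ?mulr1n ?mulr0n; field.
Qed.

Lemma det_pencil_QC m d (B : 'M[K]_(m, d)) (C : 'M[K]_d) z t :
  adjmx B *m B + adjmx C *m C = 1%:M -> z != 0 ->
  let A := block_mx 0 B 0 C : 'M_(m + d) in
  \det (z%:M - expi (- t) *: A - expi t *: adjmx A)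
  = z ^+ (m + d) * eval2 (QC C) (expi (- t) / z) (expi t / z).
Proof.
move=> BC z0 A; rewrite /A adjmx_block_mx !adjmx0 eval2_QC expiN.
have b0 := expi_neq0 t; set b := expi t.
rewrite (scalar_mx_block m d z) !scale_block_mx !scaler0.
rewrite !(opp_block_mx, add_block_mx) !subr0 !sub0r (det_scalar_block_mx _ _ _ z0).
rewrite exprD -mulrA -[z ^+ d * _]detZ mulNmx mulmxN opprK -scalemxAl -scalemxAr.
have -> : adjmx B *m B = 1%:M - adjmx C *m C by rewrite -BC addrK.
rewrite scalerA; move: (1%:M - _) => D; congr (_ * \det _).
apply/matrixP => i j; rewrite !mxE.
by case: (i == j); rewrite ?mulr1n ?mulr0n; field; rewrite ?b0 ?z0.
Qed.

Definition Hmx2 n (X : 'M[K]_n) t := expi (- t) *: X + expi t *: adjmx X.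

Lemma eigenvalue_Hmx n (X : 'M[K]_n) t a :
  eigenvalue (Hmx X t) a = root (char_poly (Hmx2 X t)) (2 * a).
Proof.
have two0 : (2 : K) != 0 by rewrite pnatr_eq0.
rewrite eigenvalue_root_char /root !horner_char_poly /Hmx -/(Hmx2 X t).
have -> : a%:M - 2^-1 *: Hmx2 X t = 2^-1 *: ((2 * a)%:M - Hmx2 X t).
  by rewrite scalerBr scale_scalar_mx mulrA mulVf ?mul1r.
by rewrite detZ mulf_eq0 expf_eq0 invr_eq0 (negbTE two0) andbF.
Qed.

Lemma horner_char_poly_Hmx2 n (X : 'M[K]_n) t z :
  (char_poly (Hmx2 X t)).[z] = \det (z%:M - expi (- t) *: X - expi t *: adjmx X).
Proof. by rewrite horner_char_poly opprD addrA. Qed.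

Lemma circular_of_char_poly_const n (X : 'M[K]_n) :
  (forall t, char_poly (Hmx2 X t) = char_poly (Hmx2 X 0)) -> circular X.
Proof. by move=> cX t1 t2 a; rewrite !eigenvalue_Hmx (cX t1) (cX t2). Qed.

Lemma poly_finite_range_on_circle (f : {poly K}) n (D : seq K) :
  (forall t, f.[expi t] / expi t ^+ n \in D) -> exists2 v, v \in D & f = v *: 'X^n.
Proof.
move=> fD.
have : \prod_(v <- D) (f - v *: 'X^n) = 0.
  apply: poly_eq0_on_circle => t; rewrite horner_prod; apply/eqP.
  rewrite prodf_seq_eq0; apply/hasP; exists (f.[expi t] / expi t ^+ n) => //.
  by rewrite !hornerE divfK ?subrr ?expf_neq0 ?expi_neq0.
by move/eqP; rewrite prodf_seq_eq0 => /hasP[v vD /= /eqP/subr0_eq fv]; exists v.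
Qed.

(* [w |-> det (z w - X - w^2 X^* )], i.e. [w^n] times the characteristic
   polynomial of [Hmx2 X t] at [z] for [w = e^{it}]. *)
Definition wchar n (X : 'M[K]_n) (z : K) : {poly K} :=
  \det ((z *: 'X)%:M - map_mx polyC X - 'X^2 *: map_mx polyC (adjmx X)).

Lemma horner_wchar n (X : 'M[K]_n) z t :
  (wchar X z).[expi t] = expi t ^+ n * (char_poly (Hmx2 X t)).[z].
Proof.
rewrite /wchar -[_.[expi t]]/(horner_eval (expi t) _) -det_map_mx.
rewrite horner_char_poly -detZ /Hmx2 expiN; congr (\det _); apply/matrixP => i j.
have w0 := expi_neq0 t; rewrite !mxE.
by case: (i == j); rewrite ?mulr1n ?mulr0n /= !horner_evalE !hornerE; field.
Qed.

Lemma char_poly_const_of_circular n (X : 'M[K]_n) :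
  circular X -> forall t, char_poly (Hmx2 X t) = char_poly (Hmx2 X 0).
Proof.
move=> cX t; have [S ES] := closed_field_poly_normal (char_poly (Hmx2 X 0)).
rewrite (monicP (char_poly_monic _)) scale1r in ES.
have mem_prods s : char_poly (Hmx2 X s) \in prods_XsubC_over S n.
  apply: monic_mem_prods_XsubC_over; rewrite ?char_poly_monic ?size_char_poly //.
  have two0 : (2 : K) != 0 by rewrite pnatr_eq0.
  move=> z; rewrite -[z in root _ z](mulVKf two0) -eigenvalue_Hmx (cX s 0).
  by rewrite eigenvalue_Hmx mulVKf // ES root_prod_XsubC.
apply: eq_poly_on_nonzero => z _.
have [|v _ Ev] := @poly_finite_range_on_circle (wchar X z) n
    (map (horner^~ z) (prods_XsubC_over S n)).
  move=> s; rewrite horner_wchar [X in X / _]mulrC mulfK ?expf_neq0 ?expi_neq0 //.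
  exact: map_f (mem_prods s).
have value s : (char_poly (Hmx2 X s)).[z] = v.
  apply: (mulfI (expf_neq0 n (expi_neq0 s))).
  by rewrite -horner_wchar Ev hornerZ hornerXn mulrC.
exact: etrans (value t) (esym (value 0)).
Qed.

Definition circle_invariant (P : {poly {poly K}}) : Prop :=
  forall t u, u != 0 -> eval2 P (expi (- t) * u) (expi t * u) = eval2 P u u.

Lemma horner_map_eval2 (F : {poly {poly K}}) u w :
  (map_poly (horner_eval u) F).[w] = eval2 F u w.
Proof.
by rewrite /eval2 -[_.[u]]/(horner_eval u _) -horner_map /= horner_evalE hornerC.
Qed.

Lemma poly2_eq0_on_circle (F : {poly {poly K}}) :
  (forall u t, u != 0 -> eval2 F u (expi t) = 0) -> F = 0.
Proof.
move=> F0; apply/polyP => j; rewrite coef0; apply: poly_eq0_on_nonzero => u u0.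
have Fu0 : map_poly (horner_eval u) F = 0.
  by apply: poly_eq0_on_circle => t; rewrite horner_map_eval2 F0.
by have := congr1 (coefp j) Fu0; rewrite /= coef_map coef0.
Qed.

Lemma eval2_diag (P : {poly {poly K}}) u : (P.['X]).[u] = eval2 P u u.
Proof.
rewrite /eval2 ![P.[_]]horner_coef !horner_sum; apply: eq_bigr => i _.
by rewrite !hornerE.
Qed.

Lemma eval2_Cxy (q : {poly K}) x y :
  eval2 ((map_poly (@cst2 R) q).[polyx R * polyy R]) x y = q.[x * y].
Proof.
rewrite /eval2 -[_.[y%:P]]/(horner_eval y%:P _) -horner_map -map_poly_comp /=.
rewrite -[_.[x]]/(horner_eval x _) -horner_map -map_poly_comp /= !horner_evalE.
rewrite /polyx /polyy !hornerE; congr _.[_]; apply/polyP => i.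
by rewrite coef_map_id0 /cst2 /= !horner_evalE !hornerC.
Qed.

Lemma circle_invariant_of_Cxy (P : {poly {poly K}}) : in_Cxy P -> circle_invariant P.
Proof.
move=> [q ->] t u _; rewrite !eval2_Cxy.
by rewrite mulrACA expiNM mul1r.
Qed.

Section Coefficients.
Variable P : {poly {poly K}}.

Definition coef2 i j : K := P`_j`_i.

Definition deg2 : nat := maxn (size P) (\max_(j < size P) size (P`_j)%R).

Lemma size_coef_le_deg2 j : (size (P`_j)%R <= deg2)%N.
Proof.
case: (ltnP j (size P)) => [jP | Pj]; last by rewrite nth_default ?size_poly0.
by rewrite (leq_trans _ (leq_maxr _ _)) // (bigD1 (Ordinal jP)) //= leq_maxl.
Qed.

Lemma coef2_eq0 i j : (deg2 <= i)%N || (deg2 <= j)%N -> coef2 i j = 0.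
Proof.
case/orP=> [iN | jN]; first by rewrite /coef2 nth_default ?(leq_trans (size_coef_le_deg2 j)).
by rewrite /coef2 [P`_j]nth_default ?coef0 // (leq_trans (leq_maxl _ _) jN).
Qed.

Lemma eval2_coef2 (x y : K) :
  eval2 P x y = \sum_(i < deg2) \sum_(j < deg2) coef2 i j * x ^+ i * y ^+ j.
Proof.
rewrite /eval2 (@horner_coef_wide _ deg2 P) ?leq_maxl // horner_sum exchange_big /=.
apply: eq_bigr => j _; rewrite hornerM -polyC_exp hornerC.
by rewrite (horner_coef_wide _ (size_coef_le_deg2 j)) mulr_suml.
Qed.

(* The monomial map [x^i y^j |-> u^(i+j) w^(j+N-i)], [N = deg2], is injective,
   so [twist] keeps the coefficients of [P] apart. *)
Definition twist : {poly {poly K}} :=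
  \sum_(i < deg2) \sum_(j < deg2) (coef2 i j *: 'X^(i + j))%:P * 'X^(j + deg2 - i).

Lemma eval2_twist (u w : K) : w != 0 ->
  eval2 twist u w = w ^+ deg2 * eval2 P (w^-1 * u) (w * u).
Proof.
move=> w0; rewrite eval2_coef2 /eval2 /twist !horner_sum mulr_sumr.
apply: eq_bigr => i _; rewrite !horner_sum mulr_sumr; apply: eq_bigr => j _.
rewrite !hornerE; have -> : w ^+ (j + deg2 - i)%N = w ^+ deg2 * (w^-1 ^+ i * w ^+ j).
  rewrite expfB_cond; last by rewrite (negbTE w0) (leq_trans (ltnW (ltn_ord i))) ?leq_addl.
  by rewrite exprD exprVn [w ^+ j * _]mulrC -mulrA [w ^+ j * _]mulrC.
rewrite /= !exprMn exprD.
by move: (coef2 i j) (u ^+ i) (u ^+ j) (w ^+ deg2) (w^-1 ^+ i) (w ^+ j) => *; ring.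
Qed.

Lemma coef_twist i j : (i < deg2)%N -> (j < deg2)%N ->
  twist`_(j + deg2 - i)`_(i + j) = coef2 i j.
Proof.
move=> iN jN; rewrite /twist pair_big coef_sum (bigD1 (Ordinal iN, Ordinal jN)) //=.
rewrite coefCM coefXn eqxx mulr1 coefD coefZ coefXn eqxx mulr1 !coef_sum big1 ?addr0 //.
move=> [i' j'] /= ij'; rewrite coefCM coefXn mulr_natr coefMn coefZ coefXn.
case: eqP => [e1 | _]; last by rewrite /= mulr0 mul0rn.
case: eqP => [e2 | _]; last by rewrite /= mulr0n.
case/negP: ij'; apply/eqP; congr (_, _); apply: val_inj => /=.
- by have := ltn_ord i'; have := ltn_ord j'; lia.
- by have := ltn_ord i'; have := ltn_ord j'; lia.
Qed.

Lemma Cxy_of_circle_invariant : circle_invariant P -> in_Cxy P.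
Proof.
move=> invP.
have twistE : twist = P.['X] *: 'X^deg2.
  apply/eqP; rewrite -subr_eq0; apply/eqP; apply: poly2_eq0_on_circle => u t u0.
  rewrite -horner_map_eval2 rmorphB /= hornerD hornerN !horner_map_eval2.
  rewrite eval2_twist ?expi_neq0 // -expiN invP // -eval2_diag.
  by rewrite /eval2 !hornerE mulrC subrr.
have offdiag (i j : nat) : i != j -> coef2 i j = 0.
  move=> ij; case: (ltnP i deg2) => iN; last by rewrite coef2_eq0 ?iN.
  case: (ltnP j deg2) => jN; last by rewrite coef2_eq0 ?jN ?orbT.
  rewrite -coef_twist // twistE coefZ coefXn.
  by case: eqP => [|_]; [move/eqP: ij; lia | rewrite mulr0 coef0].
exists (\poly_(k < deg2) coef2 k k); apply/eqP; rewrite -subr_eq0; apply/eqP.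
apply: poly2_eq0_on_circle => u t _.
rewrite -horner_map_eval2 rmorphB /= hornerD hornerN !horner_map_eval2.
rewrite eval2_Cxy eval2_coef2 horner_poly; apply/eqP; rewrite subr_eq0.
apply/eqP/eq_bigr => i _.
rewrite (bigD1 i) //= big1 ?addr0 => [|j ji]; first by rewrite -mulrA exprMn.
by rewrite offdiag ?mul0r // eq_sym.
Qed.

End Coefficients.

Section PencilDeterminant.
Variables (n : nat) (X : 'M[K]_n) (P : {poly {poly K}}).
Hypothesis det_pencil : forall z t, z != 0 ->
  \det (z%:M - expi (- t) *: X - expi t *: adjmx X)
  = z ^+ n * eval2 P (expi (- t) / z) (expi t / z).

Lemma horner_char_poly_Hmx2_pencil t z : z != 0 ->
  (char_poly (Hmx2 X t)).[z] = z ^+ n * eval2 P (expi (- t) / z) (expi t / z).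
Proof. by rewrite horner_char_poly_Hmx2; exact: det_pencil. Qed.

Lemma char_poly_const_iff_circle_invariant :
  (forall t, char_poly (Hmx2 X t) = char_poly (Hmx2 X 0)) <-> circle_invariant P.
Proof.
split=> [cX t u u0 | invP t].
  have uV0 : u^-1 != 0 by rewrite invr_eq0.
  have := horner_char_poly_Hmx2_pencil t uV0.
  rewrite cX horner_char_poly_Hmx2_pencil // oppr0 expi0 !invrK mul1r.
  by move/(mulfI (expf_neq0 n uV0)).
apply: eq_poly_on_nonzero => z z0.
apply: etrans (horner_char_poly_Hmx2_pencil t z0) _.
apply: etrans _ (esym (horner_char_poly_Hmx2_pencil 0 z0)).
by rewrite !(invP _ z^-1) ?invr_eq0.
Qed.

Lemma circular_iff_Cxy : circular X <-> in_Cxy P.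
Proof.
have [const_inv inv_const] := char_poly_const_iff_circle_invariant.
split=> [cX | /circle_invariant_of_Cxy invP].
  exact/Cxy_of_circle_invariant/const_inv/char_poly_const_of_circular.
exact/circular_of_char_poly_const/inv_const.
Qed.

End PencilDeterminant.

End Circularity.

Theorem mainTheorem8 (R : realType) (m d : nat)
    (B : 'M[R[i]]_(m, d)) (C : 'M[R[i]]_d) :
  adjmx B *m B + adjmx C *m C = 1%:M ->
  let A : 'M[R[i]]_(m + d) := block_mx 0 B 0 C in
  (forall (z : R[i]) (t : R), z != 0 ->
     \det (z%:M - expi (- t) *: A - expi t *: adjmx A)
       = z ^+ (m + d) * eval2 (QC C) (expi (- t) / z) (expi t / z)
  /\ \det (z%:M - expi (- t) *: C - expi t *: adjmx C)
       = z ^+ d * eval2 (PC C) (expi (- t) / z) (expi t / z))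
  /\ (circular A <-> in_Cxy (QC C))
  /\ (circular C <-> in_Cxy (PC C)).
Proof.
move=> BC A.
have detA z t := @det_pencil_QC R m d B C z t BC.
have detC := @det_pencil_PC R d C.
split; first by move=> z t z0; split; [exact: detA | exact: detC].
by split; apply: circular_iff_Cxy; [exact: detA | exact: detC].
Qed.
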